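(* In the setting described in the context, the following hold. (1) Suppose that for a fixed $b_0\in(0,1)$ and some $b_h<b_0$ one has $|J(u)-J(u_h^{(2)})|<b_h|J(u)-J(\tilde u)|$. Then $$I_{eff}:=\frac{|\eta^{(2)}|}{|J(u)-J(\tilde u)|}\in[1-b_0,\,1+b_0].$$ If moreover this holds along a family of such configurations (indexed by $h$) with $b_h\to0$, then $I_{eff}\to1$. (2) Suppose that for a fixed $b_{0,\gamma}\in(0,1)$ and some $b_{h,\gamma}<b_{0,\gamma}$ one has $\gamma<b_{h,\gamma}|J(u)-J(\tilde u)|$. Then $$I_{eff,\gamma}:=\frac{|\eta_h^{(2)}|}{|J(u)-J(\tilde u)|}\in[1-b_{0,\gamma},\,1+b_{0,\gamma}].$$ If moreover this holds along a family of such configurations with $b_{h,\gamma}\to0$, then $I_{eff,\gamma}\to1$.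
   Context: Let $U$ and $V$ be real Banach spaces with dual $V^*$. Let $\mathcal{A}:U\to V^*$ be a (nonlinear) operator that is three times continuously Fréchet differentiable, and let $J:U\to\mathbb{R}$ be three times continuously Fréchet differentiable. Notation: $\mathcal{A}(w)(v)$ is the value of $\mathcal{A}(w)\in V^*$ at $v\in V$. For fixed $v$, $\mathcal{A}'(w)(\varphi,v)$, $\mathcal{A}''(w)(\varphi,\psi,v)$ and $\mathcal{A}'''(w)(\varphi,\psi,\chi,v)$ denote the first, second and third Fréchet derivatives of $w\mapsto\mathcal{A}(w)(v)$ at $w$ in the directions $\varphi,\psi,\chi\in U$. Analogously, $J'(w)(\varphi)$ and $J'''(w)(\varphi,\psi,\chi)$ denote derivatives of $J$. Let $u\in U$ satisfy $\mathcal{A}(u)(v)=0$ for all $v\in V$, and let $z\in V$ satisfy $\mathcal{A}'(u)(\varphi,z)=J'(u)(\varphi)$ for all $\varphi\in U$. Let $U_h^{(2)}\subset U$ and $V_h^{(2)}\subset V$ be finite-dimensional subspaces. Let $u_h^{(2)}\in U_h^{(2)}$ satisfy $\mathcal{A}(u_h^{(2)})(v)=0$ for all $v\in V_h^{(2)}$. Let $z_h^{(2)}\in V_h^{(2)}$ satisfy $\mathcal{A}'(u_h^{(2)})(\varphi,z_h^{(2)})=J'(u_h^{(2)})(\varphi)$ for all $\varphi\in U_h^{(2)}$. Let $\tilde u\in U_h^{(2)}$ and $\tilde z\in V_h^{(2)}$ be arbitrary fixed elements. Define $\rho(\tilde u)(v):=-\mathcal{A}(\tilde u)(v)$ and $\rho^*(\tilde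 u,\tilde z)(\varphi):=J'(\tilde u)(\varphi)-\mathcal{A}'(\tilde u)(\varphi,\tilde z)$. With $e:=u-\tilde u$ and $e^*:=z-\tilde z$, define $$\mathcal{R}^{(3)}:=\frac12\int_0^1\Big[J'''(\tilde u+se)(e,e,e)-\mathcal{A}'''(\tilde u+se)(e,e,e,\tilde z+se^* )-3\mathcal{A}''(\tilde u+se)(e,e,e^* )\Big]s(s-1)\,ds.$$ Let $\mathcal{R}^{(3)(2)}$ be the same expression with $e,e^*,z$ replaced by $e^{(2)}:=u_h^{(2)}-\tilde u$, $e^{(2),*}:=z_h^{(2)}-\tilde z$, $z_h^{(2)}$. Define $$\eta_h^{(2)}:=\tfrac12\rho(\tilde u)(z_h^{(2)}-\tilde z)+\tfrac12\rho^*(\tilde u,\tilde z)(u_h^{(2)}-\tilde u),\qquad \eta^{(2)}:=\eta_h^{(2)}+\rho(\tilde u)(\tilde z)+\mathcal{R}^{(3)(2)},$$ $$\gamma:=|J(u)-J(u_h^{(2)})|+|\mathcal{R}^{(3)}-\mathcal{R}^{(3)(2)}|+|\rho(\tilde u)(\tilde z)|+|\mathcal{R}^{(3)}|.$$ *)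

From HB Require Import structures.
From mathcomp Require Import all_boot all_order all_algebra.
From mathcomp Require Import all_classical all_reals all_analysis.
Set Implicit Arguments. Unset Strict Implicit. Unset Printing Implicit Defensive.
Import Order.TTheory GRing.Theory Num.Theory.
Import numFieldNormedType.Exports.
Local Open Scope classical_set_scope.
Local Open Scope ring_scope.

Section Defs.
Variable R : realType.

Definition lin_form (X : lmodType R) (f : X -> R) : Prop :=
  forall (a : R) (x y : X), f (a *: x + y) = a * f x + f y.

Definition fin_dim_subspace (X : lmodType R) (S : set X) : Prop :=
  exists (n : nat) (b : 'I_n -> X),
    S = [set x | exists c : 'I_n -> R, x = \sum_(i < n) c i *: b i].

(** J : U -> R is three times continuously Frechet differentiable with
    Frechet derivatives J1 (= J'), J2 (= J''), J3 (= J'''), where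
    J2 w p q is the derivative of w |-> J1 w p in direction q, and
    J3 w p q r the derivative of w |-> J2 w p q in direction r.
    The k-th derivative is a bounded k-linear form; Frechet
    differentiability / continuity are w.r.t. the operator norms. *)
Definition C3_functional (U : normedModType R) (J : U -> R)
  (J1 : U -> U -> R) (J2 : U -> U -> U -> R) (J3 : U -> U -> U -> U -> R) : Prop :=
  (forall w, lin_form (J1 w)) /\
  (forall w q, lin_form (fun p => J2 w p q)) /\ (forall w p, lin_form (J2 w p)) /\
  (forall w q r, lin_form (fun p => J3 w p q r)) /\
  (forall w p r, lin_form (fun q => J3 w p q r)) /\ (forall w p q, lin_form (J3 w p q)) /\
  (forall w, exists C, forall p, `|J1 w p| <= C * `|p|) /\
  (forall w, exists C, forall p q, `|J2 w p q| <= C * `|p| * `|q|) /\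
  (forall w, exists C, forall p q r, `|J3 w p q r| <= C * `|p| * `|q| * `|r|) /\
  (forall w (eps : R), 0 < eps -> exists delta : R, 0 < delta /\
     forall h : U, `|h| < delta -> `|J (w + h) - J w - J1 w h| <= eps * `|h|) /\
  (forall w (eps : R), 0 < eps -> exists delta : R, 0 < delta /\
     forall h : U, `|h| < delta -> forall p,
       `|J1 (w + h) p - J1 w p - J2 w p h| <= eps * `|h| * `|p|) /\
  (forall w (eps : R), 0 < eps -> exists delta : R, 0 < delta /\
     forall h : U, `|h| < delta -> forall p q,
       `|J2 (w + h) p q - J2 w p q - J3 w p q h| <= eps * `|h| * `|p| * `|q|) /\
  (forall w (eps : R), 0 < eps -> exists delta : R, 0 < delta /\
     forall h : U, `|h| < delta -> forall p q r,
       `|J3 (w + h) p q r - J3 w p q r| <= eps * `|p| * `|q| * `|r|).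

(** A : U -> V^* (encoded as A w v = A(w)(v)) is three times continuously
    Frechet differentiable, with A1 w p v = A'(w)(p,v), A2 w p q v = A''(w)(p,q,v),
    A3 w p q r v = A'''(w)(p,q,r,v).  Norms are the operator norms of
    bounded multilinear maps into V^*. *)
Definition C3_operator (U V : normedModType R) (A : U -> V -> R)
  (A1 : U -> U -> V -> R) (A2 : U -> U -> U -> V -> R)
  (A3 : U -> U -> U -> U -> V -> R) : Prop :=
  (forall w, lin_form (A w)) /\ (forall w, exists C, forall v, `|A w v| <= C * `|v|) /\
  (forall w v, lin_form (fun p => A1 w p v)) /\ (forall w p, lin_form (A1 w p)) /\
  (forall w q v, lin_form (fun p => A2 w p q v)) /\
  (forall w p v, lin_form (fun q => A2 w p q v)) /\ (forall w p q, lin_form (A2 w p q)) /\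
  (forall w q r v, lin_form (fun p => A3 w p q r v)) /\
  (forall w p r v, lin_form (fun q => A3 w p q r v)) /\
  (forall w p q v, lin_form (fun r => A3 w p q r v)) /\
  (forall w p q r, lin_form (A3 w p q r)) /\
  (forall w, exists C, forall p v, `|A1 w p v| <= C * `|p| * `|v|) /\
  (forall w, exists C, forall p q v, `|A2 w p q v| <= C * `|p| * `|q| * `|v|) /\
  (forall w, exists C, forall p q r v,
      `|A3 w p q r v| <= C * `|p| * `|q| * `|r| * `|v|) /\
  (forall w (eps : R), 0 < eps -> exists delta : R, 0 < delta /\
     forall h : U, `|h| < delta -> forall v,
       `|A (w + h) v - A w v - A1 w h v| <= eps * `|h| * `|v|) /\
  (forall w (eps : R), 0 < eps -> exists delta : R, 0 < delta /\
     forall h : U, `|h| < delta -> forall p v,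
       `|A1 (w + h) p v - A1 w p v - A2 w p h v| <= eps * `|h| * `|p| * `|v|) /\
  (forall w (eps : R), 0 < eps -> exists delta : R, 0 < delta /\
     forall h : U, `|h| < delta -> forall p q v,
       `|A2 (w + h) p q v - A2 w p q v - A3 w p q h v|
         <= eps * `|h| * `|p| * `|q| * `|v|) /\
  (forall w (eps : R), 0 < eps -> exists delta : R, 0 < delta /\
     forall h : U, `|h| < delta -> forall p q r v,
       `|A3 (w + h) p q r v - A3 w p q r v| <= eps * `|p| * `|q| * `|r| * `|v|).

Variables (U V : normedModType R).

Definition rho (A : U -> V -> R) (ut : U) (v : V) : R := - A ut v.

Definition rho_star (A1 : U -> U -> V -> R) (J1 : U -> U -> R)
  (ut : U) (zt : V) (p : U) : R := J1 ut p - A1 ut p zt.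

Definition remainder3 (A2 : U -> U -> U -> V -> R) (A3 : U -> U -> U -> U -> V -> R)
  (J3 : U -> U -> U -> U -> R) (ut : U) (zt : V) (uu : U) (zz : V) : R :=
  let e := uu - ut in let es := zz - zt in
  2^-1 * \int[lebesgue_measure]_(s in `[0, 1]%classic)
    ((J3 (ut + s *: e) e e e - A3 (ut + s *: e) e e e (zt + s *: es)
      - 3 * A2 (ut + s *: e) e e es) * (s * (s - 1))).

Definition eta_h2 (A : U -> V -> R) (A1 : U -> U -> V -> R) (J1 : U -> U -> R)
  (ut : U) (zt : V) (uh : U) (zh : V) : R :=
  2^-1 * rho A ut (zh - zt) + 2^-1 * rho_star A1 J1 ut zt (uh - ut).

Definition eta2 (A : U -> V -> R) (A1 : U -> U -> V -> R) A2 A3 (J1 : U -> U -> R) J3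
  (ut : U) (zt : V) (uh : U) (zh : V) : R :=
  eta_h2 A A1 J1 ut zt uh zh + rho A ut zt + remainder3 A2 A3 J3 ut zt uh zh.

Definition gamma_est (A : U -> V -> R) A2 A3 (J : U -> R) J3
  (u : U) (z : V) (ut : U) (zt : V) (uh : U) (zh : V) : R :=
  `|J u - J uh| + `|remainder3 A2 A3 J3 ut zt u z - remainder3 A2 A3 J3 ut zt uh zh|
  + `|rho A ut zt| + `|remainder3 A2 A3 J3 ut zt u z|.

(** The discrete configuration: finite-dimensional subspaces Uh, Vh, the
    discrete primal solution uh, discrete adjoint zh, and arbitrary ut in Uh,
    zt in Vh. *)
Definition discrete_config (A : U -> V -> R) (A1 : U -> U -> V -> R) (J1 : U -> U -> R)
  (Uh : set U) (Vh : set V) (uh : U) (zh : V) (ut : U) (zt : V) : Prop :=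
  fin_dim_subspace Uh /\ fin_dim_subspace Vh /\
  Uh uh /\ (forall v, Vh v -> A uh v = 0) /\
  Vh zh /\ (forall p, Uh p -> A1 uh p zh = J1 uh p) /\
  Uh ut /\ Vh zt.

End Defs.

From HB Require Import structures.
From mathcomp Require Import all_boot all_order all_algebra.
From mathcomp Require Import all_classical all_reals all_analysis.
From mathcomp Require Import ring lra.
Set Implicit Arguments.
Unset Strict Implicit.
Unset Printing Implicit Defensive.
Import Order.TTheory GRing.Theory Num.Theory.
Import numFieldNormedType.Exports.
Local Open Scope classical_set_scope.
Local Open Scope ring_scope.

(* With e = uh - ut and es = zh - zt, the Lagrangian L(w, v) = J w - A(w)(v)
   restricted to the segment s |-> (ut + s e, zt + s es) has as third derivative the
   integrand of R^(3), whose weight s (s - 1) / 2 is the Peano kernel of the trapezoidal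
   rule; hence R^(3) = L(uh, zh) - L(ut, zt) - (L'(ut, zt) + L'(uh, zh))(e, es) / 2.
   Galerkin orthogonality gives L(uh, zh) = J uh and L'(uh, zh)(e, es) = 0, so that
   eta^(2) = J uh - J ut exactly, while eta_h^(2) differs from J u - J ut by at most
   gamma.  Both effectivity bounds then follow from | |a| / |c| - 1 | <= |c - a| / |c|. *)

Section LinearForms.
Variables (R : realType) (X : lmodType R) (f : X -> R).
Hypothesis linf : lin_form f.

Lemma lin_form0 : f 0 = 0.
Proof. by apply: (addrI (f 0)); rewrite addr0 -{1}(mul1r (f 0)) -linf scaler0 addr0. Qed.

Lemma lin_formZ a x : f (a *: x) = a * f x.
Proof. by rewrite -[a *: x]addr0 linf lin_form0 addr0. Qed.

Lemma lin_formD x y : f (x + y) = f x + f y.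
Proof. by rewrite -{1}(scale1r x) linf mul1r. Qed.

End LinearForms.

Section Frechet.
Variables (R : realType) (U : normedModType R).

Definition frechet_at (P dP : U -> R) (w : U) : Prop :=
  forall eps : R, 0 < eps -> exists delta : R, 0 < delta /\
    forall h : U, `|h| < delta -> `|P (w + h) - P w - dP h| <= eps * `|h|.

Lemma frechet_at_scaled (P dP : U -> R) (w : U) (K : R) :
  (forall eps : R, 0 < eps -> exists delta : R, 0 < delta /\
    forall h : U, `|h| < delta -> `|P (w + h) - P w - dP h| <= eps * `|h| * K) ->
  frechet_at P dP w.
Proof.
move=> HK eps eps0; have K1 : 0 < `|K| + 1 by rewrite ltr_wpDl.
have [d [d0 Hd]] := HK _ (divr_gt0 eps0 K1); exists d; split=> // h /Hd /le_trans; apply.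
apply: (le_trans (_ : _ <= eps / (`|K| + 1) * `|h| * (`|K| + 1))).
  rewrite ler_wpM2l ?mulr_ge0 ?divr_ge0 ?(ltW eps0) ?(ltW K1) //.
  by rewrite (le_trans (ler_norm K)) ?lerDl.
by rewrite mulrAC divfK ?lt0r_neq0.
Qed.

Lemma continuous_at_scaled (P : U -> R) (w : U) (K : R) :
  (forall eps : R, 0 < eps -> exists delta : R, 0 < delta /\
    forall h : U, `|h| < delta -> `|P (w + h) - P w| <= eps * K) ->
  {for w, continuous P}.
Proof.
move=> HK; apply/cvgrPdist_le => eps eps0; have K1 : 0 < `|K| + 1 by rewrite ltr_wpDl.
have [d [d0 Hd]] := HK _ (divr_gt0 eps0 K1).
near=> x; have /Hd : `|x - w| < d by rewrite distrC; near: x; exact: cvgr_dist_lt.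
rewrite [w + _]addrC subrK distrC => /le_trans; apply.
rewrite -[leRHS](divfK (lt0r_neq0 K1)) ler_wpM2l ?divr_ge0 ?(ltW eps0) ?(ltW K1) //.
by rewrite (le_trans (ler_norm K)) ?lerDl.
Unshelve. all: by end_near.
Qed.

End Frechet.

Section DerivativesAlongLines.
Variables (R : realType) (U : normedModType R).

Lemma frechet_at_line (P dP : U -> R) (w0 e : U) (s : R) :
  lin_form dP -> frechet_at P dP (w0 + s *: e) ->
  frechet_at (fun t : R => P (w0 + t *: e)) ( *%R^~ (dP e)) s.
Proof.
move=> lindP HP eps eps0; have e1 : 0 < `|e| + 1 by rewrite ltr_wpDl.
have [d [d0 Hd]] := HP _ (divr_gt0 eps0 e1).
exists (d / (`|e| + 1)); split=> [|t ht]; first exact: divr_gt0.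
have /Hd : `|t *: e| < d.
  rewrite normrZ (le_lt_trans _ (_ : `|t| * (`|e| + 1) < d)) ?ler_wpM2l ?lerDl //.
  by rewrite -ltr_pdivlMr.
rewrite scalerDl addrA (lin_formZ lindP) mulrC => /le_trans; apply.
rewrite normrZ mulrCA [leRHS]mulrC ler_wpM2l // mulrAC.
by rewrite ler_pdivrMr // ler_wpM2l ?lerDl ?(ltW eps0).
Qed.

Lemma is_derive_frechet (g : R -> R) (s l : R) :
  frechet_at g ( *%R^~ l) s -> is_derive s 1 g l.
Proof.
move=> Hg; have dg : (fun h : R => h^-1 *: (g (h *: 1 + s) - g s)) @ 0^' --> l.
  apply/cvgrPdist_le => eps eps0; have [d [d0 Hd]] := Hg eps eps0.
  rewrite near_withinE; near=> t => t0.
  have /Hd : `|t| < d by near: t; exact: (nbhs0_lt (V := R)) d0.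
  rewrite scaler1 [t + s]addrC => Ht.
  have -> : l - t^-1 *: (g (s + t) - g s) = - t^-1 * (g (s + t) - g s - t * l).
    by rewrite /GRing.scale /=; field.
  by rewrite normrM normrN normfV ler_pdivrMl ?normr_gt0 // [_ * eps]mulrC.
apply: DeriveDef; last exact: cvg_lim.
by apply/cvg_ex; exists l.
Unshelve. all: by end_near.
Qed.

Lemma is_derive_line (P dP : U -> R) (w0 e : U) (s : R) :
  lin_form dP -> frechet_at P dP (w0 + s *: e) ->
  is_derive s 1 (fun t : R => P (w0 + t *: e)) (dP e).
Proof. by move=> lindP HP; apply/is_derive_frechet/frechet_at_line. Qed.

Lemma continuous_line (P : U -> R) (w0 e : U) (s : R) :
  {for w0 + s *: e, continuous P} -> {for s, continuous (fun t : R => P (w0 + t *: e))}.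
Proof.
move=> cP; apply: (continuous_comp (f := fun t : R => w0 + t *: e)) => //.
by apply: cvgD; [exact: cvg_cst | apply: cvgZ; [exact: cvg_id | exact: cvg_cst]].
Qed.

Variable V : lmodType R.

Lemma line_affine_split (P : U -> V -> R) (w0 e : U) (v0 es : V) :
  (forall w, lin_form (P w)) ->
  (fun t : R => P (w0 + t *: e) (v0 + t *: es)) =
    (fun t : R => P (w0 + t *: e) v0 + t * P (w0 + t *: e) es).
Proof. by move=> linP; apply: funext => t; rewrite (lin_formD (linP _)) (lin_formZ (linP _)). Qed.

Lemma is_derive_line_affine (P : U -> V -> R) (dP : U -> V -> R)
    (w0 e : U) (v0 es : V) (s : R) :
  (forall w, lin_form (P w)) -> (forall v, lin_form (dP ^~ v)) -> lin_form (dP e) ->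
  (forall v, frechet_at (P ^~ v) (dP ^~ v) (w0 + s *: e)) ->
  is_derive s 1 (fun t : R => P (w0 + t *: e) (v0 + t *: es))
    (dP e (v0 + s *: es) + P (w0 + s *: e) es).
Proof.
move=> linP lindP lindPe HP; rewrite (line_affine_split _ _ _ _ linP).
have := is_deriveD (is_derive_line (lindP v0) (HP v0))
  (is_deriveM (is_derive_id s 1) (is_derive_line (lindP es) (HP es))).
move/is_derive_eq; apply.
by rewrite (lin_formD lindPe) (lin_formZ lindPe) /GRing.scale /=; ring.
Qed.

Lemma continuous_line_affine (P : U -> V -> R) (w0 e : U) (v0 es : V) (s : R) :
  (forall w, lin_form (P w)) -> (forall v, {for w0 + s *: e, continuous (P ^~ v)}) ->
  {for s, continuous (fun t : R => P (w0 + t *: e) (v0 + t *: es))}.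
Proof.
move=> linP cP; rewrite (line_affine_split _ _ _ _ linP).
apply: cvgD; first exact: (continuous_line (cP v0)).
by apply: cvgM; [exact: cvg_id | exact: (continuous_line (cP es))].
Qed.

End DerivativesAlongLines.

Section TrapezoidalRule.
Variable R : realType.

Lemma trapezoid_error (f f1 f2 f3 : R -> R) :
  (forall s : R, is_derive s 1 f (f1 s)) -> (forall s : R, is_derive s 1 f1 (f2 s)) ->
  (forall s : R, is_derive s 1 f2 (f3 s)) -> continuous f3 ->
  2^-1 * \int[lebesgue_measure]_(s in `[0, 1]) (f3 s * (s * (s - 1)))
    = f 1 - f 0 - 2^-1 * (f1 0 + f1 1).
Proof.
move=> df df1 df2 cf3.
pose q (s : R) := s * (s - 1); pose dq (s : R) := 2 * s - 1.
have q' (s : R) : is_derive s 1 q (dq s).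
  by rewrite /q /dq; apply: is_derive_eq; rewrite /GRing.scale /=; ring.
have dq' (s : R) : is_derive s 1 dq 2.
  by rewrite /dq; apply: is_derive_eq; rewrite /GRing.scale /=; ring.
(* Integrating by parts twice, [f2 q - f1 dq + 2 f] is a primitive of [f3 q]. *)
pose F := f2 * q - f1 * dq + 2 *: f.
have dF (s : R) : is_derive s 1 F (f3 s * q s).
  have := is_deriveD (is_deriveB (is_deriveM (df2 s) (q' s)) (is_deriveM (df1 s) (dq' s)))
    (is_deriveZ 2 (df s)).
  by move/is_derive_eq; apply; rewrite /q /dq /GRing.scale /=; ring.
have cF : continuous F.
  by move=> s; apply/differentiable_continuous/derivable1_diffP; case: (dF s).
have := @continuous_FTC2 R (fun s => f3 s * q s) F 0 1 ltr01.
rewrite /Rintegral => ->.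
- by rewrite -EFinB /= /F /q /dq !fctE /GRing.scale /=; field.
- apply: continuous_subspaceT => s; apply: cvgM; first exact: cf3.
  by apply: cvgM; [exact: cvg_id | apply: cvgB; [exact: cvg_id | exact: cvg_cst]].
- split; first by move=> s _; case: (dF s).
  + exact: cvg_at_right_filter (cF 0).
  + exact: cvg_at_left_filter (cF 1).
- by move=> s _; rewrite derive1E derive_val.
Qed.
End TrapezoidalRule.

Section LagrangianAlongSegment.
Variables (R : realType) (U V : normedModType R).

Definition lagrangian (J : U -> R) (A : U -> V -> R) (w : U) (v : V) : R := J w - A w v.

Definition lagrangian_deriv (J1 : U -> U -> R) (A : U -> V -> R) (A1 : U -> U -> V -> R)
    (w : U) (v : V) (p : U) (q : V) : R :=
  J1 w p - A1 w p v - A w q.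

Variables (A : U -> V -> R) (A1 : U -> U -> V -> R) (A2 : U -> U -> U -> V -> R)
  (A3 : U -> U -> U -> U -> V -> R).
Variables (J : U -> R) (J1 : U -> U -> R) (J2 : U -> U -> U -> R)
  (J3 : U -> U -> U -> U -> R).

Hypotheses (linJ1 : forall w, lin_form (J1 w)) (linJ2 : forall w p, lin_form (J2 w p))
  (linJ3 : forall w p q, lin_form (J3 w p q)).
Hypotheses (linA : forall w, lin_form (A w)) (linA1 : forall w p, lin_form (A1 w p))
  (linA2 : forall w p q, lin_form (A2 w p q)) (linA3 : forall w p q r, lin_form (A3 w p q r)).
Hypotheses (linA1_dir : forall w v, lin_form (A1 w ^~ v))
  (linA2_dir : forall w p v, lin_form (A2 w p ^~ v))
  (linA3_dir : forall w p q v, lin_form (A3 w p q ^~ v)).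
Hypotheses (frechetJ : forall w, frechet_at J (J1 w) w)
  (frechetJ1 : forall w p, frechet_at (J1 ^~ p) (J2 w p) w)
  (frechetJ2 : forall w p q, frechet_at (fun x => J2 x p q) (J3 w p q) w)
  (continuousJ3 : forall w p q r, {for w, continuous (fun x => J3 x p q r)}).
Hypotheses (frechetA : forall w v, frechet_at (A ^~ v) (A1 w ^~ v) w)
  (frechetA1 : forall w p v, frechet_at (fun x => A1 x p v) (A2 w p ^~ v) w)
  (frechetA2 : forall w p q v, frechet_at (fun x => A2 x p q v) (A3 w p q ^~ v) w)
  (continuousA3 : forall w p q r v, {for w, continuous (fun x => A3 x p q r v)}).

Variables (ut uh : U) (zt zh : V).
Let e := uh - ut.
Let es := zh - zt.
Let w (s : R) := ut + s *: e.
Let z (s : R) := zt + s *: es.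
Let d2L (s : R) := J2 (w s) e e - A2 (w s) e e (z s) - 2 * A1 (w s) e es.
Let d3L (s : R) := J3 (w s) e e e - A3 (w s) e e e (z s) - 3 * A2 (w s) e e es.

Lemma is_derive_lagrangian_segment (s : R) :
  is_derive s 1 (fun t => lagrangian J A (w t) (z t))
    (lagrangian_deriv J1 A A1 (w s) (z s) e es).
Proof.
have := is_deriveB (is_derive_line (linJ1 (w s)) (frechetJ (w s)))
  (is_derive_line_affine zt es linA (linA1_dir (w s)) (linA1 (w s) e) (frechetA (w s))).
by move/is_derive_eq; apply; rewrite /lagrangian_deriv; ring.
Qed.

Lemma is_derive_lagrangian_deriv_segment (s : R) :
  is_derive s 1 (fun t => lagrangian_deriv J1 A A1 (w t) (z t) e es) (d2L s).
Proof.
have := is_deriveB (is_deriveB (is_derive_line (linJ2 (w s) e) (frechetJ1 (w s) e))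
    (is_derive_line_affine zt es (linA1 ^~ e) (linA2_dir (w s) e) (linA2 (w s) e e)
      (frechetA1 (w s) e)))
  (is_derive_line (linA1_dir (w s) es) (frechetA (w s) es)).
by move/is_derive_eq; apply; rewrite /d2L; ring.
Qed.

Lemma is_derive_d2L (s : R) : is_derive s 1 d2L (d3L s).
Proof.
have := is_deriveB (is_deriveB (is_derive_line (linJ3 (w s) e e) (frechetJ2 (w s) e e))
    (is_derive_line_affine zt es (fun x => linA2 x e e) (linA3_dir (w s) e e)
      (linA3 (w s) e e e) (frechetA2 (w s) e e)))
  (is_deriveZ 2 (is_derive_line (linA2_dir (w s) e es) (frechetA1 (w s) e es))).
by move/is_derive_eq; apply; rewrite /d3L /GRing.scale /=; ring.
Qed.

Lemma continuous_d3L : continuous d3L.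
Proof.
move=> s; have cA2 : {for s, continuous (fun t => A2 (w t) e e es)}.
  have := is_derive_line (linA3_dir (w s) e e es) (frechetA2 (w s) e e es).
  by case=> dA2 _; apply/differentiable_continuous/derivable1_diffP.
exact: (continuousB (continuousB (continuous_line (@continuousJ3 (w s) e e e))
    (continuous_line_affine (fun x => linA3 x e e e) (@continuousA3 (w s) e e e)))
  (continuousM (@cst_continuous R R 3 s) cA2)).
Qed.

Lemma remainder3_trapezoid :
  remainder3 A2 A3 J3 ut zt uh zh =
    lagrangian J A uh zh - lagrangian J A ut zt
    - 2^-1 * (lagrangian_deriv J1 A A1 ut zt e es + lagrangian_deriv J1 A A1 uh zh e es).
Proof.
rewrite /remainder3 -/e -/es.
rewrite (trapezoid_error is_derive_lagrangian_segment is_derive_lagrangian_deriv_segment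
  is_derive_d2L continuous_d3L).
by rewrite /w /z !scale0r !scale1r !addr0 /e /es !subrKC.
Qed.

End LagrangianAlongSegment.

Section C3Maps.
Variables (R : realType) (U V : normedModType R).

Lemma C3_functional_frechet (J : U -> R) J1 J2 J3 :
  C3_functional J J1 J2 J3 ->
  [/\ forall w, frechet_at J (J1 w) w,
      forall w p, frechet_at (J1 ^~ p) (J2 w p) w,
      forall w p q, frechet_at (fun x => J2 x p q) (J3 w p q) w &
      forall w p q r, {for w, continuous (fun x => J3 x p q r)}].
Proof.
case=> _ [_ [_ [_ [_ [_ [_ [_ [_ [frJ [frJ1 [frJ2 cJ3]]]]]]]]]]].
split=> [w | w p | w p q | w p q r].
- apply: (frechet_at_scaled (K := 1)) => eps /(frJ w)[d [d0 Hd]].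
  by exists d; split=> // h /Hd; rewrite mulr1.
- apply: (frechet_at_scaled (K := `|p|)) => eps /(frJ1 w)[d [d0 Hd]].
  by exists d; split=> // h /Hd.
- apply: (frechet_at_scaled (K := `|p| * `|q|)) => eps /(frJ2 w)[d [d0 Hd]].
  by exists d; split=> // h /Hd/(_ p q); rewrite !mulrA.
- apply: (continuous_at_scaled (K := `|p| * `|q| * `|r|)) => eps /(cJ3 w)[d [d0 Hd]].
  by exists d; split=> // h /Hd/(_ p q r); rewrite !mulrA.
Qed.

Lemma C3_operator_frechet (A : U -> V -> R) A1 A2 A3 :
  C3_operator A A1 A2 A3 ->
  [/\ forall w v, frechet_at (A ^~ v) (A1 w ^~ v) w,
      forall w p v, frechet_at (fun x => A1 x p v) (A2 w p ^~ v) w,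
      forall w p q v, frechet_at (fun x => A2 x p q v) (A3 w p q ^~ v) w &
      forall w p q r v, {for w, continuous (fun x => A3 x p q r v)}].
Proof.
case=> _ [_ [_ [_ [_ [_ [_ [_ [_ [_ [_ [_ [_ [_ [frA [frA1 [frA2 cA3]]]]]]]]]]]]]]]].
split=> [w v | w p v | w p q v | w p q r v].
- apply: (frechet_at_scaled (K := `|v|)) => eps /(frA w)[d [d0 Hd]].
  by exists d; split=> // h /Hd.
- apply: (frechet_at_scaled (K := `|p| * `|v|)) => eps /(frA1 w)[d [d0 Hd]].
  by exists d; split=> // h /Hd/(_ p v); rewrite !mulrA.
- apply: (frechet_at_scaled (K := `|p| * `|q| * `|v|)) => eps /(frA2 w)[d [d0 Hd]].
  by exists d; split=> // h /Hd/(_ p q v); rewrite !mulrA.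
- apply: (continuous_at_scaled (K := `|p| * `|q| * `|r| * `|v|)) => eps /(cA3 w)[d [d0 Hd]].
  by exists d; split=> // h /Hd/(_ p q r v); rewrite !mulrA.
Qed.

Variables (A : U -> V -> R) (A1 : U -> U -> V -> R) (A2 : U -> U -> U -> V -> R)
  (A3 : U -> U -> U -> U -> V -> R).
Variables (J : U -> R) (J1 : U -> U -> R) (J2 : U -> U -> U -> R)
  (J3 : U -> U -> U -> U -> R).
Hypotheses (HA : C3_operator A A1 A2 A3) (HJ : C3_functional J J1 J2 J3).

Lemma remainder3_lagrangian (ut uh : U) (zt zh : V) :
  remainder3 A2 A3 J3 ut zt uh zh =
    lagrangian J A uh zh - lagrangian J A ut zt
    - 2^-1 * (lagrangian_deriv J1 A A1 ut zt (uh - ut) (zh - zt)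
              + lagrangian_deriv J1 A A1 uh zh (uh - ut) (zh - zt)).
Proof.
have [frJ frJ1 frJ2 cJ3] := C3_functional_frechet HJ.
have [frA frA1 frA2 cA3] := C3_operator_frechet HA.
case: HJ => linJ1 [_ [linJ2 [_ [_ [linJ3 _]]]]].
case: HA => linA [_ [linA1_dir [linA1 [_ [linA2_dir [linA2 [_ [_ [linA3_dir [linA3 _]]]]]]]]]].
by apply: remainder3_trapezoid.
Qed.

Lemma eta2_lagrangian (ut uh : U) (zt zh : V) :
  eta2 A A1 A2 A3 J1 J3 ut zt uh zh =
    lagrangian J A uh zh - J ut
    - 2^-1 * lagrangian_deriv J1 A A1 uh zh (uh - ut) (zh - zt).
Proof.
rewrite /eta2 /eta_h2 /rho /rho_star remainder3_lagrangian.
by rewrite /lagrangian /lagrangian_deriv; ring.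
Qed.

End C3Maps.

Lemma fin_dim_subspaceB (R : realType) (X : lmodType R) (S : set X) (x y : X) :
  fin_dim_subspace S -> S x -> S y -> S (x - y).
Proof.
move=> [n [b ->]] [cx ->] [cy ->]; exists (fun i => cx i - cy i).
by rewrite -sumrB; apply: eq_bigr => i _; rewrite scalerBl.
Qed.

Section DiscreteConfiguration.
Variables (R : realType) (U V : normedModType R).
Variables (A : U -> V -> R) (A1 : U -> U -> V -> R) (A2 : U -> U -> U -> V -> R)
  (A3 : U -> U -> U -> U -> V -> R).
Variables (J : U -> R) (J1 : U -> U -> R) (J2 : U -> U -> U -> R)
  (J3 : U -> U -> U -> U -> R).
Hypotheses (HA : C3_operator A A1 A2 A3) (HJ : C3_functional J J1 J2 J3).
Variables (Uh : set U) (Vh : set V) (uh ut : U) (zh zt : V).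
Hypothesis Hh : discrete_config A A1 J1 Uh Vh uh zh ut zt.

Lemma eta2_discrete : eta2 A A1 A2 A3 J1 J3 ut zt uh zh = J uh - J ut.
Proof.
case: Hh => sU [sV [Uuh [Auh [Vzh [A1uh [Uut Vzt]]]]]].
rewrite (eta2_lagrangian HA HJ) /lagrangian /lagrangian_deriv (Auh _ Vzh).
rewrite (Auh _ (fin_dim_subspaceB sV Vzh Vzt)) (A1uh _ (fin_dim_subspaceB sU Uuh Uut)).
by rewrite subrr !subr0 mulr0 subr0.
Qed.

Lemma eta_h2_error_le_gamma (u : U) (z : V) :
  `|J u - J ut - eta_h2 A A1 J1 ut zt uh zh| <= gamma_est A A2 A3 J J3 u z ut zt uh zh.
Proof.
have := eta2_discrete; rewrite /eta2 /gamma_est => eta2E.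
set r := remainder3 A2 A3 J3 ut zt u z.
set r2 := remainder3 A2 A3 J3 ut zt uh zh in eta2E *.
have -> : J u - J ut - eta_h2 A A1 J1 ut zt uh zh = (J u - J uh) - (r - r2) + rho A ut zt + r.
  by lra.
apply: (le_trans (ler_normD _ _)); rewrite lerD2r.
apply: (le_trans (ler_normD _ _)); rewrite lerD2r.
by rewrite -[`|r - r2|]normrN ler_normD.
Qed.

End DiscreteConfiguration.

Section EffectivityIndex.
Variable R : realType.

Lemma norm_ratio_dist1 (a c x b : R) :
  x < b * `|c| -> `|c - a| <= x -> `| `|a| / `|c| - 1| <= b.
Proof.
move=> hb hx; have c0 : 0 < `|c|.
  rewrite lt_def normr_ge0 andbT; apply: contraTneq hb => ->.
  by rewrite mulr0 -leNgt (le_trans _ hx).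
rewrite -[X in _ - X](divff (lt0r_neq0 c0)) -mulrBl normrM normfV normr_id.
rewrite ler_pdivrMr // distrC (le_trans (ler_dist_dist _ _)) //.
by rewrite (le_trans hx) ?ltW.
Qed.

Lemma dist1_le_itv (y b b0 : R) : `|y - 1| <= b -> b < b0 -> 1 - b0 <= y <= 1 + b0.
Proof. by rewrite ler_distl => /andP[? ?] ?; apply/andP; split; lra. Qed.

Lemma cvg_dist1 (y b : nat -> R) :
  (forall n, `|y n - 1| <= b n) -> b @ \oo --> (0 : R) -> y @ \oo --> (1 : R).
Proof.
move=> yb b0; apply/cvgrPdist_le => eps eps0.
move/cvgrPdist_lt : b0 => /(_ eps eps0); apply: filterS => n bn.
rewrite distrC (le_trans (yb n)) // ltW // (le_lt_trans _ bn) //.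
by rewrite sub0r normrN ler_norm.
Qed.

End EffectivityIndex.

Theorem mainTheorem3 (R : realType) (U V : completeNormedModType R)
  (A : U -> V -> R) (A1 : U -> U -> V -> R) (A2 : U -> U -> U -> V -> R)
  (A3 : U -> U -> U -> U -> V -> R)
  (J : U -> R) (J1 : U -> U -> R) (J2 : U -> U -> U -> R) (J3 : U -> U -> U -> U -> R)
  (HA : C3_operator A A1 A2 A3) (HJ : C3_functional J J1 J2 J3)
  (u : U) (z : V)
  (Hu : forall v : V, A u v = 0)
  (Hz : forall p : U, A1 u p z = J1 u p) :
  (* (1) single configuration *)
  (forall (Uh : set U) (Vh : set V) (uh : U) (zh : V) (ut : U) (zt : V) (b0 bh : R),
     discrete_config A A1 J1 Uh Vh uh zh ut zt ->
     0 < b0 < 1 -> bh < b0 ->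
     `|J u - J uh| < bh * `|J u - J ut| ->
     let Ieff := `|eta2 A A1 A2 A3 J1 J3 ut zt uh zh| / `|J u - J ut| in
     1 - b0 <= Ieff <= 1 + b0) /\
  (* (1) family of configurations with b_h -> 0 *)
  (forall (Uh : nat -> set U) (Vh : nat -> set V) (uh : nat -> U) (zh : nat -> V)
          (ut : nat -> U) (zt : nat -> V) (b0 : R) (bh : nat -> R),
     0 < b0 < 1 ->
     (forall n, discrete_config A A1 J1 (Uh n) (Vh n) (uh n) (zh n) (ut n) (zt n)) ->
     (forall n, bh n < b0) ->
     (forall n, `|J u - J (uh n)| < bh n * `|J u - J (ut n)|) ->
     bh @ \oo --> (0 : R) ->
     (fun n => `|eta2 A A1 A2 A3 J1 J3 (ut n) (zt n) (uh n) (zh n)| / `|J u - J (ut n)|)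
       @ \oo --> (1 : R)) /\
  (* (2) single configuration *)
  (forall (Uh : set U) (Vh : set V) (uh : U) (zh : V) (ut : U) (zt : V) (b0g bhg : R),
     discrete_config A A1 J1 Uh Vh uh zh ut zt ->
     0 < b0g < 1 -> bhg < b0g ->
     gamma_est A A2 A3 J J3 u z ut zt uh zh < bhg * `|J u - J ut| ->
     let Ieffg := `|eta_h2 A A1 J1 ut zt uh zh| / `|J u - J ut| in
     1 - b0g <= Ieffg <= 1 + b0g) /\
  (* (2) family of configurations with b_{h,gamma} -> 0 *)
  (forall (Uh : nat -> set U) (Vh : nat -> set V) (uh : nat -> U) (zh : nat -> V)
          (ut : nat -> U) (zt : nat -> V) (b0g : R) (bhg : nat -> R),
     0 < b0g < 1 ->
     (forall n, discrete_config A A1 J1 (Uh n) (Vh n) (uh n) (zh n) (ut n) (zt n)) ->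
     (forall n, bhg n < b0g) ->
     (forall n, gamma_est A A2 A3 J J3 u z (ut n) (zt n) (uh n) (zh n)
                  < bhg n * `|J u - J (ut n)|) ->
     bhg @ \oo --> (0 : R) ->
     (fun n => `|eta_h2 A A1 J1 (ut n) (zt n) (uh n) (zh n)| / `|J u - J (ut n)|)
       @ \oo --> (1 : R)).
Proof.
have index_eta2 Uh Vh uh zh ut zt (b : R) :
    discrete_config A A1 J1 Uh Vh uh zh ut zt -> `|J u - J uh| < b * `|J u - J ut| ->
    `| `|eta2 A A1 A2 A3 J1 J3 ut zt uh zh| / `|J u - J ut| - 1| <= b.
  move=> Hh /norm_ratio_dist1; apply.
  by rewrite (eta2_discrete HA HJ Hh) opprB addrA subrK.
have index_eta_h2 Uh Vh uh zh ut zt (b : R) :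
    discrete_config A A1 J1 Uh Vh uh zh ut zt ->
    gamma_est A A2 A3 J J3 u z ut zt uh zh < b * `|J u - J ut| ->
    `| `|eta_h2 A A1 J1 ut zt uh zh| / `|J u - J ut| - 1| <= b.
  by move=> Hh /norm_ratio_dist1; apply; exact: (eta_h2_error_le_gamma HA HJ Hh).
split; [|split; [|split]].
- by move=> ? ? ? ? ? ? ? ? Hh _ bb0 /(index_eta2 _ _ _ _ _ _ _ Hh)/dist1_le_itv; apply.
- move=> ? ? ? ? ? ? ? ? _ Hh _ Hb /cvg_dist1; apply=> n.
  exact: index_eta2 (Hh n) (Hb n).
- by move=> ? ? ? ? ? ? ? ? Hh _ bb0 /(index_eta_h2 _ _ _ _ _ _ _ Hh)/dist1_le_itv; apply.
- move=> ? ? ? ? ? ? ? ? _ Hh _ Hb /cvg_dist1; apply=> n.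
  exact: index_eta_h2 (Hh n) (Hb n).
Qed.
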